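(* Let $M$ and $M'$ be two stable matchings in an instance $I$ of SPA-S. If some student $s_i$ is assigned in $M$ and in $M'$ to different projects offered by the same lecturer $l_k$, and $s_i$ prefers $M$ to $M'$, then $l_k$ prefers $s_i$ to some student $s_z\in M(l_k)\setminus M'(l_k)$.
   Context: An instance $I$ of SPA-S consists of a finite set $\mathcal{S}$ of students, a finite set $\mathcal{P}$ of projects and a finite set $\mathcal{L}$ of lecturers. Each student $s_i$ ranks a subset $A_i\subseteq\mathcal{P}$ (its acceptable projects) in strict order. Each project is offered by exactly one lecturer; lecturer $l_k$ offers a nonempty set $P_k\subseteq\mathcal{P}$, the $P_k$ partitioning $\mathcal{P}$. Each lecturer $l_k$ ranks in strict order the students who find at least one project of $P_k$ acceptable. Projects have capacities $c_j\in\mathbb{Z}^+$, lecturers have capacities $d_k\in\mathbb{Z}^+$ with $\max\{c_j:p_j\in P_k\}\le d_k\le\sum\{c_j:p_j\in P_k\}$. A pair $(s_i,p_j)$, $p_j$ offered by $l_k$, is acceptable if $p_j\in A_i$ and $s_i$ is on $l_k$'s list. A matching $M$ is a set of acceptable pairs with each student in at most one pair, $|M(p_j)|\le c_j$, $|M(l_k)|\le d_k$, where $M(s_i)$, $M(p_j)$, $M(l_k)$ denote the project of $s_i$, the students assigned to $p_j$, and the students assigned to projects of $l_k$. Undersubscribed/full means fewer than/exactly capacity many assigned students. An acceptable pair $(s_i,p_j)\notin M$ ($p_j$ offered by $l_k$) blocks $M$ if ($s_i$ is unassigned or prefers $p_j$ to $M(s_i)$) and one of: (P1) $p_j$ and $l_k$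 undersubscribed; (P2) $p_j$ undersubscribed, $l_k$ full, $s_i\in M(l_k)$; (P3) $p_j$ undersubscribed, $l_k$ full, $l_k$ prefers $s_i$ to the worst student of $M(l_k)$; (P4) $p_j$ full and $l_k$ prefers $s_i$ to the worst student of $M(p_j)$. $M$ is stable if it has no blocking pair. A student $s$ prefers $M$ to $M'$ if $s$ is assigned in both and prefers $M(s)$ to $M'(s)$. *)

From mathcomp Require Import all_boot.
Set Implicit Arguments. Unset Strict Implicit. Unset Printing Implicit Defensive.

Record spa_instance (S P L : finType) := SpaInstance {
  spref : S -> seq P;            (* student's preference list = acceptable projects, in order *)
  lpref : L -> seq S;
  lec : P -> L;
  pcap : P -> nat;
  lcap : L -> nat;
  spref_uniq : forall s, uniq (spref s);
  lpref_uniq : forall l, uniq (lpref l);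
  lpref_def : forall l s, (s \in lpref l) = has (fun p => lec p == l) (spref s);
  lec_nonempty : forall l, exists p, lec p = l;
  pcap_pos : forall p, 0 < pcap p;
  lcap_max : forall l p, lec p = l -> pcap p <= lcap l;
  lcap_sum : forall l, lcap l <= \sum_(p | lec p == l) pcap p
}.

Section Defs.
Variables (S P L : finType) (I : spa_instance S P L).

Definition sprefers (s : S) (p q : P) : bool :=
  [&& p \in spref I s, q \in spref I s & index p (spref I s) < index q (spref I s)].

Definition lprefers (l : L) (s t : S) : bool :=
  [&& s \in lpref I l, t \in lpref I l & index s (lpref I l) < index t (lpref I l)].

Definition acceptable (s : S) (p : P) : bool :=
  (p \in spref I s) && (s \in lpref I (lec I p)).

Definition Mp (M : {set S * P}) (p : P) : {set S} := [set s | (s, p) \in M].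
Definition Ml (M : {set S * P}) (l : L) : {set S} :=
  [set s | [exists p, (lec I p == l) && ((s, p) \in M)]].

Definition is_matching (M : {set S * P}) : Prop :=
  [/\ forall s p, (s, p) \in M -> acceptable s p,
      forall s p q, (s, p) \in M -> (s, q) \in M -> p = q,
      forall p, #|Mp M p| <= pcap I p
    & forall l, #|Ml M l| <= lcap I l].

Definition assigned (M : {set S * P}) (s : S) : Prop := exists p, (s, p) \in M.

Definition prefers_to_worst (l : L) (s : S) (A : {set S}) : Prop :=
  exists2 w, w \in A &
    (forall u, u \in A -> u = w \/ lprefers l u w) /\ lprefers l s w.

Definition blocking (M : {set S * P}) (s : S) (p : P) : Prop :=
  let l := lec I p in
  [/\ acceptable s p, (s, p) \notin M,
      (~ assigned M s \/ forall q, (s, q) \in M -> sprefers s p q)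
    & [\/ (#|Mp M p| < pcap I p /\ #|Ml M l| < lcap I l),
          [/\ #|Mp M p| < pcap I p, #|Ml M l| = lcap I l & s \in Ml M l],
          [/\ #|Mp M p| < pcap I p, #|Ml M l| = lcap I l & prefers_to_worst l s (Ml M l)]
        | #|Mp M p| = pcap I p /\ prefers_to_worst l s (Mp M p)]].

Definition stable (M : {set S * P}) : Prop :=
  is_matching M /\ forall s p, ~ blocking M s p.

End Defs.

(* Call a student better off in M than in N if M gives him a project he prefers
   to his N-project (or N leaves him unassigned).  For a lecturer m, compare the
   number of students assigned to m in the matching they are better off in with
   the number assigned to m in the other matching.  Summed over all lecturers the
   first count dominates the second, since every such student is assigned in the
   matching he is better off in.  Stability gives the reverse inequality at each
   lecturer: if u is better off in M with M(u) = r, then (u, r) does not block N,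
   so r is full in N and ranks N(r) above u; every student of N(r) \ M(r) is then
   better off in M too (otherwise he would block M, as u is worse), and
   |M(r) \ N(r)| <= |N(r) \ M(r)|.  The alternative "m is full in N and ranks N(m)
   above u" cannot happen for both matchings at once, and when it happens the
   capacity of m restores the balance.  So the counts agree at every lecturer.
   Finally, take N = M'.  If l ranked s above no student of M(l) \ N(l), the
   students better off in M whom l does not rank above s stay at l in N, while
   for those ranked above s the project-wise comparison is strict at p: s is
   counted on the M side of p but is not ranked above himself, and N(p) is full
   of students ranked above s. *)

From mathcomp Require Import all_boot zify.

Set Implicit Arguments. Unset Strict Implicit. Unset Printing Implicit Defensive.

(* [sprefers] and [lprefers] unfold to [ranked_before]. *)
Definition ranked_before (T : eqType) (sq : seq T) (a b : T) : bool :=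
  [&& a \in sq, b \in sq & index a sq < index b sq].

Section RankedBefore.
Variables (T : eqType) (sq : seq T).

Lemma ranked_before_asym a b : ranked_before sq a b -> ~~ ranked_before sq b a.
Proof. by case/and3P=> _ _ ab; apply/and3P=> -[_ _ ba]; lia. Qed.

Lemma ranked_before_trans a b c :
  ranked_before sq a b -> ranked_before sq b c -> ranked_before sq a c.
Proof.
by rewrite /ranked_before => /and3P[-> _ ab] /and3P[_ -> bc]; apply: ltn_trans bc.
Qed.

Lemma ranked_before_total a b : a \in sq -> b \in sq -> a != b ->
  ranked_before sq a b || ranked_before sq b a.
Proof.
move=> a_sq b_sq neq_ab; rewrite /ranked_before a_sq b_sq /= -neq_ltn.
by apply: contra neq_ab => /eqP/index_inj-> //.
Qed.

End RankedBefore.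

Lemma sum_card_functional (T U : finType) (P : pred U) (A : {set T}) (R : T -> U -> bool) :
    (forall x u v, R x u -> R x v -> u = v) ->
  \sum_(u | P u) #|[set x in A | R x u]| = #|[set x in A | [exists u, P u && R x u]]|.
Proof.
move=> R_fun; under eq_bigr => u _ do rewrite -sum1_card big_mkcond /=.
rewrite exchange_big -sum1_card [RHS]big_mkcond /=; apply: eq_bigr => x _.
under eq_bigr => u _ do rewrite inE.
rewrite inE; case: (x \in A) => /=; last by rewrite big1.
case: existsP => [[u0 /andP[Pu0 Ru0]] | no_u]; last first.
  by rewrite big1 // => u Pu; case: ifP => // Ru; case: no_u; exists u; rewrite Pu.
rewrite (bigD1 u0) //= Ru0 big1 // => u /andP[_ neq_uu0].
by case: ifP => // Ru; rewrite (R_fun _ _ _ Ru Ru0) eqxx in neq_uu0.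
Qed.

Section Instance.
Variables (S P L : finType) (I : spa_instance S P L).

Lemma lprefers_asym l a b : lprefers I l a b -> ~~ lprefers I l b a.
Proof. exact: ranked_before_asym. Qed.

Lemma lprefers_irr l a : ~~ lprefers I l a a.
Proof. by apply/negP=> aa; case/negP: (lprefers_asym aa). Qed.

Lemma lprefers_trans l a b c :
  lprefers I l a b -> lprefers I l b c -> lprefers I l a c.
Proof. exact: ranked_before_trans. Qed.

Lemma lprefers_total l a b : a \in lpref I l -> b \in lpref I l -> a != b ->
  lprefers I l a b || lprefers I l b a.
Proof. exact: ranked_before_total. Qed.

Lemma sprefers_asym x q q' : sprefers I x q q' -> ~~ sprefers I x q' q.
Proof. exact: ranked_before_asym. Qed.

Lemma sprefers_irr x q : ~~ sprefers I x q q.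
Proof. by apply/negP=> qq; case/negP: (sprefers_asym qq). Qed.

Lemma sprefers_total x q q' : q \in spref I x -> q' \in spref I x -> q != q' ->
  sprefers I x q q' || sprefers I x q' q.
Proof. exact: ranked_before_total. Qed.

Lemma exists_worst l (A : {set S}) : A != set0 -> {subset A <= lpref I l} ->
  exists2 w, w \in A & {in A, forall u, u = w \/ lprefers I l u w}.
Proof.
case/set0Pn=> a0 a0A A_l.
have [w wA w_max] := arg_maxnP (fun w => index w (lpref I l)) a0A.
exists w => // u uA; have [->|neq_uw] := eqVneq u w; [by left | right].
have /orP[//|wu] := lprefers_total (A_l u uA) (A_l w wA) neq_uw.
by have := w_max u uA; case/and3P: wu => _ _; lia.
Qed.

Lemma ranked_above_of_not_prefers_to_worst l v (A : {set S}) :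
  {subset A <= lpref I l} -> v \in lpref I l -> v \notin A ->
  ~ prefers_to_worst I l v A -> {in A, forall w, lprefers I l w v}.
Proof.
move=> A_l v_l vNA not_ptw.
have [->|A_ne0] := eqVneq A set0; first by move=> w; rewrite inE.
have [w0 w0A w0_worst] := exists_worst A_ne0 A_l.
have w0v : lprefers I l w0 v.
  have neq_vw0 : v != w0 by apply: contraNneq vNA => ->.
  have /orP[vw0|//] := lprefers_total v_l (A_l w0 w0A) neq_vw0.
  by case: not_ptw; exists w0.
by move=> w /w0_worst[->|ww0] //; apply: lprefers_trans ww0 w0v.
Qed.

Section Matching.
Variable Z : {set S * P}.
Hypothesis matchingZ : is_matching I Z.

Lemma matching_acceptable x q : (x, q) \in Z -> acceptable I x q.
Proof. by case: matchingZ => acc _ _ _; apply: acc. Qed.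

Lemma matching_functional x q q' : (x, q) \in Z -> (x, q') \in Z -> q = q'.
Proof. by case: matchingZ => _ fun_Z _ _; apply: fun_Z. Qed.

Lemma matching_pcap q : #|Mp Z q| <= pcap I q.
Proof. by case: matchingZ. Qed.

Lemma matching_lcap m : #|Ml I Z m| <= lcap I m.
Proof. by case: matchingZ. Qed.

Lemma mem_spref x q : (x, q) \in Z -> q \in spref I x.
Proof. by case/matching_acceptable/andP. Qed.

Lemma mem_Ml x q : (x, q) \in Z -> x \in Ml I Z (lec I q).
Proof. by move=> xq; rewrite inE; apply/existsP; exists q; rewrite eqxx xq. Qed.

Lemma Mp_sub_Ml q : Mp Z q \subset Ml I Z (lec I q).
Proof. by apply/subsetP=> x; rewrite inE; apply: mem_Ml. Qed.

Lemma Ml_sub_lpref m : {subset Ml I Z m <= lpref I m}.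
Proof.
move=> x; rewrite inE => /existsP[q /andP[/eqP <- xq]].
by case/andP: (matching_acceptable xq).
Qed.

Lemma card_Ml_partition (A : {set S}) m :
  #|A :&: Ml I Z m| = \sum_(r | lec I r == m) #|A :&: Mp Z r|.
Proof.
transitivity #|[set x in A | [exists r, (lec I r == m) && ((x, r) \in Z)]]|.
  by apply: eq_card => x; rewrite !inE.
rewrite -sum_card_functional; last by move=> x q q'; apply: matching_functional.
by apply: eq_bigr => r _; apply: eq_card => x; rewrite !inE.
Qed.

Lemma sum_card_Ml (A : {set S}) :
  \sum_m #|A :&: Ml I Z m| = #|[set x in A | [exists m, x \in Ml I Z m]]|.
Proof.
transitivity (\sum_m #|[set x in A | x \in Ml I Z m]|).
  by apply: eq_bigr => m _; apply: eq_card => x; rewrite !inE.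
rewrite (sum_card_functional predT) => [|x m m'].
  by apply: eq_card => x; rewrite !inE.
rewrite !inE => /existsP[q /andP[/eqP <- xq]] /existsP[q' /andP[/eqP <- xq']].
by rewrite (matching_functional xq xq').
Qed.

End Matching.

Lemma stable_unblocked Z v r : stable I Z -> acceptable I v r -> (v, r) \notin Z ->
    (forall q, (v, q) \in Z -> sprefers I v r q) ->
  (#|Mp Z r| = pcap I r /\ {in Mp Z r, forall w, lprefers I (lec I r) w v}) \/
  (#|Ml I Z (lec I r)| = lcap I (lec I r) /\
   {in Ml I Z (lec I r), forall w, lprefers I (lec I r) w v}).
Proof.
move=> [matchingZ unblocked] acc_vr vrNZ v_prefers; set m := lec I r.
have blocks : [\/ #|Mp Z r| < pcap I r /\ #|Ml I Z m| < lcap I m,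
    [/\ #|Mp Z r| < pcap I r, #|Ml I Z m| = lcap I m & v \in Ml I Z m],
    [/\ #|Mp Z r| < pcap I r, #|Ml I Z m| = lcap I m
      & prefers_to_worst I m v (Ml I Z m)]
  | #|Mp Z r| = pcap I r /\ prefers_to_worst I m v (Mp Z r)] -> False.
  by move=> P1234; apply: (unblocked v r); split=> //; right.
have v_m : v \in lpref I m by case/andP: acc_vr.
have [Mp_full|Mp_lt] := eqVneq #|Mp Z r| (pcap I r).
  left; split=> //; apply: ranked_above_of_not_prefers_to_worst => //.
  - by move=> w /(subsetP (Mp_sub_Ml Z r)); apply: Ml_sub_lpref.
  - by rewrite inE.
  - by move=> ptw; apply: blocks; apply: Or44.
have {}Mp_lt : #|Mp Z r| < pcap I r by rewrite ltn_neqAle Mp_lt matching_pcap.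
have [Ml_full|Ml_lt] := eqVneq #|Ml I Z m| (lcap I m); last first.
  by case: blocks; apply: Or41; split=> //; rewrite ltn_neqAle Ml_lt matching_lcap.
right; split=> //; apply: ranked_above_of_not_prefers_to_worst => //.
- exact: Ml_sub_lpref.
- by apply/negP=> v_Ml; apply: blocks; apply: Or42.
- by move=> ptw; apply: blocks; apply: Or43.
Qed.

Definition better (Y X : {set S * P}) : {set S} :=
  [set x | [exists q, ((x, q) \in Y) && [forall q', ((x, q') \in X) ==> sprefers I x q q']]].

Lemma better_assigned Y X x : x \in better Y X -> exists q, (x, q) \in Y.
Proof. by rewrite inE => /existsP[q /andP[xq _]]; exists q. Qed.

Section Better.
Variables (X Y : {set S * P}).
Hypothesis matchingY : is_matching I Y.

Lemma better_prefers x q q' :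
  x \in better Y X -> (x, q) \in Y -> (x, q') \in X -> sprefers I x q q'.
Proof.
rewrite inE => /existsP[q0 /andP[xq0 /forallP q0_best]] xq xq'.
by rewrite (matching_functional matchingY xq xq0); apply: (implyP (q0_best q')).
Qed.

Lemma better_notin x q : x \in better Y X -> (x, q) \in Y -> (x, q) \notin X.
Proof.
move=> x_better xq; apply/negP=> xqX.
by have := better_prefers x_better xq xqX; rewrite (negbTE (sprefers_irr _ _)).
Qed.

End Better.

Lemma better_disjoint X Y : is_matching I X -> is_matching I Y ->
  better Y X :&: better X Y = set0.
Proof.
move=> matchingX matchingY; apply/setP=> x; rewrite inE [RHS]inE.
apply/negP=> /andP[xY xX].
have [q xq] := better_assigned xY; have [q' xq'] := better_assigned xX.
have := sprefers_asym (better_prefers matchingY xY xq xq').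
by rewrite (better_prefers matchingX xX xq' xq).
Qed.

Lemma better_or_better X Y x q : is_matching I X -> is_matching I Y ->
  (x, q) \in Y -> (x, q) \notin X -> (x \in better Y X) || (x \in better X Y).
Proof.
move=> matchingX matchingY xqY xqNX; apply/negPn/negP=> /norP[xNY xNX].
move: xNY; rewrite inE negb_exists => /forallP/(_ q); rewrite xqY /=.
case/forallPn=> q'; rewrite negb_imply => /andP[xq'X not_qq'].
have neq_qq' : q != q' by apply: contraNneq xqNX => ->.
have /orP[qq'|q'q] := sprefers_total (mem_spref matchingY xqY)
  (mem_spref matchingX xq'X) neq_qq'; first by rewrite qq' in not_qq'.
case/negP: xNX; rewrite inE; apply/existsP; exists q'; rewrite xq'X /=.
by apply/forallP=> q''; apply/implyP=> xq''Y; rewrite (matching_functional matchingY xq''Y xqY).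
Qed.

Lemma better_unblocked X Y u r : stable I X -> is_matching I Y ->
    u \in better Y X -> (u, r) \in Y ->
  (#|Mp X r| = pcap I r /\ {in Mp X r, forall w, lprefers I (lec I r) w u}) \/
  (#|Ml I X (lec I r)| = lcap I (lec I r) /\
   {in Ml I X (lec I r), forall w, lprefers I (lec I r) w u}).
Proof.
move=> stableX matchingY u_better ur; apply: stable_unblocked => //.
- exact: matching_acceptable ur.
- exact: better_notin u_better ur.
- by move=> q uq; apply: better_prefers u_better ur uq.
Qed.

Lemma Mp_setD_sub_better X Y u r : is_matching I X -> stable I Y -> (u, r) \in Y ->
    {in Mp X r, forall w, lprefers I (lec I r) w u} ->
  Mp X r :\: Mp Y r \subset better Y X.
Proof.
move=> matchingX stableY ur X_above_u; apply/subsetP=> v /setDP[vrX vrNY]; rewrite !inE in vrX vrNY.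
have /orP[v_better|//] := better_or_better (proj1 stableY) matchingX vrX vrNY.
have u_below_v : ~~ lprefers I (lec I r) u v.
  by apply: lprefers_asym; apply: X_above_u; rewrite inE.
case: (better_unblocked stableY matchingX v_better vrX) => -[_ Y_above_v].
  by case/negP: u_below_v; apply: Y_above_v; rewrite inE.
by case/negP: u_below_v; apply: Y_above_v; apply: mem_Ml ur.
Qed.

Lemma card_better_Mp X Y u r : is_matching I X -> stable I Y -> (u, r) \in Y ->
    #|Mp X r| = pcap I r -> {in Mp X r, forall w, lprefers I (lec I r) w u} ->
  #|better Y X :&: Mp Y r| <= #|better Y X :&: Mp X r|.
Proof.
move=> matchingX stableY ur Mp_full X_above_u.
have better_Y_sub : better Y X :&: Mp Y r \subset Mp Y r :\: Mp X r.
  apply/subsetP=> x /setIP[x_better]; rewrite !inE => xr; rewrite xr andbT.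
  exact: (better_notin (proj1 stableY) x_better xr).
have setD_sub := Mp_setD_sub_better matchingX stableY ur X_above_u.
have card_setD : #|Mp Y r :\: Mp X r| <= #|Mp X r :\: Mp Y r|.
  rewrite !cardsD setIC; have := matching_pcap (proj1 stableY) r.
  have := subset_leq_card (subsetIl (Mp X r) (Mp Y r)); lia.
apply: leq_trans (subset_leq_card better_Y_sub) (leq_trans card_setD _).
by apply: subset_leq_card; rewrite subsetI setD_sub subsetDl.
Qed.

Lemma Ml_setD_better_sub X Y m : is_matching I X -> is_matching I Y ->
  Ml I Y m :\: (better Y X :|: better X Y) \subset Ml I X m.
Proof.
move=> matchingX matchingY; apply/subsetP=> x /setDP[+ not_better].
rewrite inE => /existsP[q /andP[/eqP <- xqY]].
have [xqX|xqNX] := boolP ((x, q) \in X); first exact: mem_Ml.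
by case/negP: not_better; rewrite inE (better_or_better matchingX matchingY xqY xqNX).
Qed.

Lemma card_Ml_better X Y m : is_matching I X -> is_matching I Y ->
  #|better Y X :&: Ml I Y m| + #|better X Y :&: Ml I Y m| + #|Ml I X m| =
  #|better Y X :&: Ml I X m| + #|better X Y :&: Ml I X m| + #|Ml I Y m|.
Proof.
move=> matchingX matchingY; set D := better Y X :|: better X Y.
have card_split Z : #|Ml I Z m| =
    #|better Y X :&: Ml I Z m| + #|better X Y :&: Ml I Z m| + #|Ml I Z m :\: D|.
  rewrite -(cardsID D (Ml I Z m)) setIC setIUl cardsU setIACA setIid.
  by rewrite better_disjoint // set0I cards0 subn0.
have same_rest : Ml I Y m :\: D = Ml I X m :\: D.
  have sub_YX := Ml_setD_better_sub m matchingX matchingY.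
  have sub_XY := Ml_setD_better_sub m matchingY matchingX.
  rewrite setUC -/D in sub_XY.
  apply/setP=> x; apply/setDP/setDP=> -[xm xND]; split=> //.
    by apply: (subsetP sub_YX); apply/setDP.
  by apply: (subsetP sub_XY); apply/setDP.
rewrite (card_split X) (card_split Y) same_rest; lia.
Qed.

Lemma sum_card_Ml_le Z (A : {set S}) : is_matching I Z -> \sum_m #|A :&: Ml I Z m| <= #|A|.
Proof.
move=> matchingZ; rewrite sum_card_Ml //; apply: subset_leq_card.
by apply/subsetP=> x; rewrite inE => /andP[].
Qed.

Lemma sum_card_better_Ml Z X : is_matching I Z ->
  \sum_m #|better Z X :&: Ml I Z m| = #|better Z X|.
Proof.
move=> matchingZ; rewrite sum_card_Ml //; apply: eq_card => x; rewrite [LHS]inE.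
case: (boolP (x \in better Z X)) => //= /better_assigned[q xq].
by apply/existsP; exists (lec I q); apply: mem_Ml xq.
Qed.

(* The lecturer case of [better_unblocked]. *)
Definition full_above X Y m : bool :=
  (#|Ml I X m| == lcap I m) &&
  [exists u in better Y X :&: Ml I Y m, [forall w in Ml I X m, lprefers I m w u]].

Lemma full_above_exclusive M N m : ~~ (full_above M N m && full_above N M m).
Proof.
apply/negP=> /andP[/andP[_ /exists_inP[u /setIP[_ uN] M_above_u]]].
case/andP=> _ /exists_inP[t /setIP[_ tM] N_above_t].
have := lprefers_asym (forall_inP M_above_u t tM).
by rewrite (forall_inP N_above_t u uN).
Qed.

Lemma card_better_Ml X Y m : stable I X -> stable I Y -> ~~ full_above X Y m ->
  #|better Y X :&: Ml I Y m| <= #|better Y X :&: Ml I X m|.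
Proof.
move=> stableX stableY not_full.
rewrite (card_Ml_partition (proj1 stableY)) (card_Ml_partition (proj1 stableX)).
apply: leq_sum => r /eqP lec_r.
have [->|[u /setIP[u_better]]] := set_0Vmem (better Y X :&: Mp Y r); first by rewrite cards0.
rewrite inE => ur.
have [[Mp_full X_above_u] | [Ml_full X_above_u]] :=
  better_unblocked stableX (proj1 stableY) u_better ur.
  exact: card_better_Mp (proj1 stableX) stableY ur Mp_full X_above_u.
case/negP: not_full; rewrite /full_above -lec_r Ml_full eqxx /=.
by apply/exists_inP; exists u; [rewrite inE u_better mem_Ml | apply/forall_inP].
Qed.

Definition card_at_preferred M N m :=
  #|better M N :&: Ml I M m| + #|better N M :&: Ml I N m|.

Definition card_at_unpreferred M N m :=
  #|better M N :&: Ml I N m| + #|better N M :&: Ml I M m|.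

Lemma card_at_preferred_le M N m : stable I M -> stable I N ->
  card_at_preferred M N m <= card_at_unpreferred M N m.
Proof.
move=> stableM stableN; rewrite /card_at_preferred /card_at_unpreferred.
have := card_Ml_better m (proj1 stableN) (proj1 stableM).
have := matching_lcap (proj1 stableM) m; have := matching_lcap (proj1 stableN) m.
have := full_above_exclusive M N m.
case: (boolP (full_above N M m)) => [/andP[/eqP N_full _] | /(card_better_Ml stableN stableM)];
case: (boolP (full_above M N m)) => [/andP[/eqP M_full _] | /(card_better_Ml stableM stableN)];
  rewrite //=; lia.
Qed.

Lemma sum_card_at_unpreferred_le M N : is_matching I M -> is_matching I N ->
  \sum_m card_at_unpreferred M N m <= \sum_m card_at_preferred M N m.
Proof.
move=> matchingM matchingN; rewrite !big_split /= !sum_card_better_Ml //.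
by apply: leq_add; apply: sum_card_Ml_le.
Qed.

Lemma card_at_preferred_eq M N m : stable I M -> stable I N ->
  card_at_preferred M N m = card_at_unpreferred M N m.
Proof.
move=> stableM stableN; apply/eqP.
have le_all i : card_at_preferred M N i <= card_at_unpreferred M N i
    ?= iff (card_at_preferred M N i == card_at_unpreferred M N i).
  exact/leqif_eq/card_at_preferred_le.
have [le_sums] := leqif_sum (P := xpredT) (fun i _ => le_all i).
have sums_ge := sum_card_at_unpreferred_le (proj1 stableM) (proj1 stableN).
rewrite eqn_leq le_sums sums_ge.
by move=> /esym/forallP/(_ m).
Qed.

Section SameLecturer.
Variables (M N : {set S * P}) (s : S) (p p' : P) (l : L).
Hypotheses (stableM : stable I M) (stableN : stable I N).
Hypotheses (sp : (s, p) \in M) (sp' : (s, p') \in N).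
Hypotheses (lec_p : lec I p = l) (lec_p' : lec I p' = l) (s_prefers : sprefers I s p p').
Hypothesis no_worse : {in Ml I M l :\: Ml I N l, forall z, ~~ lprefers I l s z}.

Let above_s := [set x | lprefers I l x s].

Let s_Ml_N : s \in Ml I N l.
Proof. by rewrite -lec_p'; apply: mem_Ml sp'. Qed.

Let s_better : s \in better M N.
Proof.
rewrite inE; apply/existsP; exists p; rewrite sp /=.
by apply/forallP=> q; apply/implyP=> sq; rewrite (matching_functional (proj1 stableN) sq sp').
Qed.

Lemma card_better_Mp_above u r : u \in better M N -> (u, r) \in M -> lec I r = l ->
    u \in s |: above_s ->
  #|better M N :&: Mp M r| <= #|better M N :&: above_s :&: Mp N r|.
Proof.
move=> u_better ur lec_r u_above.
have above_u_above w : lprefers I l w u -> w \in above_s.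
  by case/setU1P: u_above => [-> | ]; rewrite !inE // => us wu; apply: lprefers_trans wu us.
have s_not_above_u : ~~ lprefers I l s u.
  case/setU1P: u_above => [-> | ]; first exact: lprefers_irr.
  by rewrite inE; apply: lprefers_asym.
have [[Mp_full N_above_u] | [_ N_above_u]] :=
  better_unblocked stableN (proj1 stableM) u_better ur; rewrite lec_r in N_above_u.
  have Mp_N_above : Mp N r \subset above_s.
    by apply/subsetP=> w /N_above_u; apply: above_u_above.
  rewrite -setIA (setIidPr Mp_N_above).
  by apply: card_better_Mp (proj1 stableN) stableM ur Mp_full _; rewrite lec_r.
by rewrite N_above_u in s_not_above_u.
Qed.

Lemma card_better_above_Mp_le r : lec I r = l ->
  #|better M N :&: above_s :&: Mp M r| <= #|better M N :&: above_s :&: Mp N r|.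
Proof.
move=> lec_r.
have [->|[u]] := set_0Vmem (better M N :&: above_s :&: Mp M r); first by rewrite cards0.
case/setIP=> /setIP[u_better u_above]; rewrite inE => ur.
apply: (leq_trans _ (card_better_Mp_above u_better ur lec_r (setU1r _ u_above))).
by apply: subset_leq_card; rewrite -setIA setIS // subsetIr.
Qed.

Lemma card_better_above_Mp_lt :
  #|better M N :&: above_s :&: Mp M p| < #|better M N :&: above_s :&: Mp N p|.
Proof.
apply: (leq_trans _ (card_better_Mp_above s_better sp lec_p (setU11 _ _))).
apply: proper_card; apply/properP; split; first by rewrite -setIA setIS // subsetIr.
exists s; first by rewrite in_setI s_better inE.
by rewrite !in_setI [s \in above_s]inE (negbTE (lprefers_irr _ _)) andbF.
Qed.

Lemma better_below_Ml_sub :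
  better M N :&: Ml I M l :\: above_s \subset better M N :&: Ml I N l :\: above_s.
Proof.
apply/subsetP=> x /setDP[/setIP[x_better xM] x_not_above].
rewrite in_setD in_setI x_better x_not_above /=.
apply/negPn/negP=> xNN; case/negP: x_not_above; rewrite inE.
have neq_xs : x != s by apply: contraNneq xNN => ->.
have /orP[// | sx] := lprefers_total (Ml_sub_lpref (proj1 stableM) xM)
  (Ml_sub_lpref (proj1 stableN) s_Ml_N) neq_xs.
by have := @no_worse x; rewrite in_setD xNN xM sx => /(_ isT).
Qed.

Lemma card_better_Ml_lt : #|better M N :&: Ml I M l| < #|better M N :&: Ml I N l|.
Proof.
rewrite -(cardsID above_s (_ :&: Ml I M l)) -(cardsID above_s (_ :&: Ml I N l)).
rewrite !(setIAC _ (Ml I _ l)).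
rewrite (card_Ml_partition (proj1 stableM)) (card_Ml_partition (proj1 stableN)).
rewrite (bigD1 p) ?lec_p //= [X in _ < X + _](bigD1 p) ?lec_p //=.
have le_rest : \sum_(r | (lec I r == l) && (r != p)) #|better M N :&: above_s :&: Mp M r|
    <= \sum_(r | (lec I r == l) && (r != p)) #|better M N :&: above_s :&: Mp N r|.
  by apply: leq_sum => r /andP[/eqP lec_r _]; apply: card_better_above_Mp_le.
have := subset_leq_card better_below_Ml_sub; have := card_better_above_Mp_lt; lia.
Qed.

Lemma card_at_preferred_lt : card_at_preferred M N l < card_at_unpreferred M N l.
Proof.
rewrite /card_at_preferred /card_at_unpreferred.
have := card_Ml_better l (proj1 stableN) (proj1 stableM).
have := matching_lcap (proj1 stableN) l; have := card_better_Ml_lt.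
case: (boolP (full_above M N l)) => [/andP[/eqP M_full _] | /(card_better_Ml stableM stableN)];
  lia.
Qed.

End SameLecturer.

End Instance.

Theorem lemma4 (S P L : finType) (I : spa_instance S P L)
  (M M' : {set S * P}) (s : S) (p p' : P) (l : L) :
  stable I M -> stable I M' ->
  (s, p) \in M -> (s, p') \in M' -> p != p' ->
  lec I p = l -> lec I p' = l ->
  sprefers I s p p' ->
  exists2 z, z \in Ml I M l :\: Ml I M' l & lprefers I l s z.
Proof.
(* [p != p'] already follows from [sprefers I s p p']. *)
move=> stableM stableM' sp sp' _ lec_p lec_p' s_prefers.
case: (boolP [exists z in Ml I M l :\: Ml I M' l, lprefers I l s z]) => [/exists_inP // | ].
move=> /exists_inPn no_worse; exfalso.
have := card_at_preferred_eq l stableM stableM'.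
have := card_at_preferred_lt stableM stableM' sp sp' lec_p lec_p' s_prefers no_worse.
lia.
Qed.
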